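(* Let ${\cal G}$ be a Hopf algebra over a field ${\bf k}$, regarded as a right ${\cal G}$-comodule algebra via its comultiplication $\Delta_{\cal G}$. Then there is no left Ore set $T\subset{\cal G}$ for which the localization $i_T:{\cal G}\to T^{-1}{\cal G}$ is nontrivial (i.e. not an isomorphism) and $\Delta_{\cal G}$ extends to a coaction $\Delta_T$ on $T^{-1}{\cal G}$ making it a right ${\cal G}$-comodule algebra with $\Delta_T\circ i_T=(i_T\otimes{\rm id})\circ\Delta_{\cal G}$.
   Context: A left Ore set is a multiplicative subset $T\subset{\cal G}\setminus\{0\}$ satisfying the left Ore condition ($\forall t\in T,r\in{\cal G}\ \exists t'\in T, r'\in{\cal G}: r't=t'r$) and left reversibility; $T^{-1}{\cal G}$ is the ring of left fractions and $i_T$ the localization map. *)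

From HB Require Import structures.
From mathcomp Require Import all_boot all_algebra.
Set Implicit Arguments. Unset Strict Implicit. Unset Printing Implicit Defensive.
Import GRing.Theory.
Local Open Scope ring_scope.

Section Defs.
Variable k : fieldType.

Definition lin (V U : lmodType k) (f : V -> U) : Prop :=
  forall (a : k) (u v : V), f (a *: u + v) = a *: f u + f v.

Definition bilin (V W U : lmodType k) (f : V -> W -> U) : Prop :=
  (forall v, lin (f v)) /\ (forall w, lin (fun v => f v w)).

Definition is_tensor (V W C : lmodType k) (t : V -> W -> C) : Prop :=
  bilin t /\
  forall (U : lmodType k) (f : V -> W -> U), bilin f ->
    exists h : C -> U, [/\ lin h, (forall v w, h (t v w) = f v w) &
      forall h' : C -> U, lin h' -> (forall v w, h' (t v w) = f v w) ->
        forall c, h' c = h c].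

Record tensorSp (V W : lmodType k) := TensorSp {
  tsp_car : lmodType k;
  tsp_t : V -> W -> tsp_car;
  tsp_ax : is_tensor tsp_t }.

Record tensorAlg (A B : algType k) := TensorAlg {
  tal_car : algType k;
  tal_t : A -> B -> tal_car;
  tal_ax : is_tensor tal_t;
  tal_mul : forall a b c d, tal_t a b * tal_t c d = tal_t (a * c) (b * d);
  tal_one : tal_t 1 1 = 1 }.

Definition alg_morph (A B : algType k) (f : A -> B) : Prop :=
  [/\ lin f, f 1 = 1 & forall x y, f (x * y) = f x * f y].

Definition eps_morph (A : algType k) (e : A -> k) : Prop :=
  [/\ (forall a u v, e (a *: u + v) = a * e u + e v), e 1 = 1 &
      forall x y, e (x * y) = e x * e y].

Definition is_hopf (G : algType k) (GG : tensorAlg G G)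
    (D : G -> tal_car GG) (e : G -> k) (S : G -> G) : Prop :=
  let t := tal_t GG in
  [/\ alg_morph D /\ eps_morph e, lin S,
    (* coassociativity: (Delta (x) id) Delta = (id (x) Delta) Delta, up to the
       canonical associativity isomorphism G(x)(G(x)G) -> (G(x)G)(x)G *)
    (forall (X1 : tensorSp (tal_car GG) G) (X2 : tensorSp G (tal_car GG))
        (D1 : tal_car GG -> tsp_car X1) (D2 : tal_car GG -> tsp_car X2)
        (al : tsp_car X2 -> tsp_car X1),
        lin D1 -> lin D2 -> lin al ->
        (forall a b, D1 (t a b) = tsp_t X1 (D a) b) ->
        (forall a b, D2 (t a b) = tsp_t X2 a (D b)) ->
        (forall a b c, al (tsp_t X2 a (t b c)) = tsp_t X1 (t a b) c) ->
        forall x, al (D2 (D x)) = D1 (D x)),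
    (forall psi : tal_car GG -> G, lin psi ->
        (forall a b, psi (t a b) = e a *: b) -> forall x, psi (D x) = x) /\
    (forall psi : tal_car GG -> G, lin psi ->
        (forall a b, psi (t a b) = e b *: a) -> forall x, psi (D x) = x) &
    (forall mu : tal_car GG -> G, lin mu ->
        (forall a b, mu (t a b) = S a * b) -> forall x, mu (D x) = e x *: 1) /\
    (forall mu : tal_car GG -> G, lin mu ->
        (forall a b, mu (t a b) = a * S b) -> forall x, mu (D x) = e x *: 1)].

Definition left_ore_set (G : algType k) (T : G -> Prop) : Prop :=
  [/\ (forall t, T t -> t <> 0), T 1,
      (forall s t, T s -> T t -> T (s * t)),
      (forall t r, T t -> exists t' r', T t' /\ r' * t = t' * r) &
      (forall t r, T t -> r * t = 0 -> exists t', T t' /\ t' * r = 0)].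

(* i : G -> L is the ring of left fractions T^{-1}G (standard characterization
   of the left Ore localization), as a k-algebra map *)
Definition is_left_loc (G L : algType k) (T : G -> Prop) (i : G -> L) : Prop :=
  [/\ alg_morph i,
      (forall t, T t -> exists u, u * i t = 1 /\ i t * u = 1),
      (forall x, exists t r, T t /\ i t * x = i r) &
      (forall r, i r = 0 <-> exists t, T t /\ t * r = 0)].

Definition is_comod_ext (G : algType k) (GG : tensorAlg G G)
    (D : G -> tal_car GG) (e : G -> k) (L : algType k) (i : G -> L)
    (LG : tensorAlg L G) (DT : L -> tal_car LG) : Prop :=
  let t := tal_t GG in let tL := tal_t LG in
  [/\ alg_morph DT,
    (forall phi : tal_car GG -> tal_car LG, lin phi ->
        (forall a b, phi (t a b) = tL (i a) b) ->
        forall g, DT (i g) = phi (D g)),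
    (* coassociativity: (DT (x) id) DT = (id (x) Delta) DT, up to the canonical
       isomorphism L(x)(G(x)G) -> (L(x)G)(x)G *)
    (forall (X1 : tensorSp (tal_car LG) G) (X2 : tensorSp L (tal_car GG))
        (D1 : tal_car LG -> tsp_car X1) (D2 : tal_car LG -> tsp_car X2)
        (al : tsp_car X2 -> tsp_car X1),
        lin D1 -> lin D2 -> lin al ->
        (forall x g, D1 (tL x g) = tsp_t X1 (DT x) g) ->
        (forall x g, D2 (tL x g) = tsp_t X2 x (D g)) ->
        (forall x a b, al (tsp_t X2 x (t a b)) = tsp_t X1 (tL x a) b) ->
        forall y, al (D2 (DT y)) = D1 (DT y)) &
    (forall psi : tal_car LG -> L, lin psi ->
        (forall x g, psi (tL x g) = e g *: x) -> forall y, psi (DT y) = y)].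

End Defs.

Arguments is_hopf {k G} GG D e S.
Arguments left_ore_set {k G} T.
Arguments is_left_loc {k G L} T i.
Arguments is_comod_ext {k G} GG D e {L} i LG DT.

(* Suppose the coaction extends to DT on L = T^-1 G.  The linear map
   twist : x (x) g |-> x i(S g) on L (x) G satisfies
   twist (z DT(i a)) = e(a) twist(z), by the antipode axiom and the
   antimultiplicativity of S.  Writing y in L as a left fraction u i(r), with u
   the inverse of i(s), s in T, it follows that right multiplication by DT y
   scales twist by a scalar eps(y) (with e(s) <> 0 because twist 1 = 1), and
   eps is a character of L extending e.  Then x (x) g |-> eps(x) g is an
   algebra map L (x) G -> G sending DT (i a) to a by the counit axiom, so its
   value on DT u is a left inverse v of s in G.  Hence i is injective (i r = 0
   forces s r = 0 with s in T) and surjective (u i(r) = i(v r)).  Only the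
   description of L by left fractions is used. *)

From mathcomp Require Import all_boot all_algebra.
From HB Require Import structures.
From mathcomp Require Import boolp.
Set Implicit Arguments. Unset Strict Implicit. Unset Printing Implicit Defensive.
Import GRing.Theory.
Local Open Scope ring_scope.

Section LinearMaps.
Variable k : fieldType.
Implicit Types A B C : lmodType k.

Lemma lin0 A B (h : A -> B) : lin h -> h 0 = 0.
Proof.
move=> lh; have := lh 1 0 0; rewrite !scale1r addr0 => h00.
by apply: (addrI (h 0)); rewrite addr0 -h00.
Qed.

Lemma linD A B (h : A -> B) : lin h -> forall x y, h (x + y) = h x + h y.
Proof. by move=> lh x y; have := lh 1 x y; rewrite !scale1r. Qed.

Lemma linZ A B (h : A -> B) : lin h -> forall a x, h (a *: x) = a *: h x.
Proof. by move=> lh a x; have := lh a x 0; rewrite !addr0 (lin0 lh) addr0. Qed.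

Lemma linB A B (h : A -> B) : lin h -> forall x y, h (x - y) = h x - h y.
Proof.
by move=> lh x y; rewrite (linD lh) -scaleN1r (linZ lh) scaleN1r.
Qed.

Lemma lin_id A : lin (fun x : A => x). Proof. by []. Qed.

Lemma lin_comp A B C (f : A -> B) (g : B -> C) :
  lin f -> lin g -> lin (fun x => g (f x)).
Proof. by move=> lf lg a x y; rewrite lf lg. Qed.

Lemma lin_scale A B (f : A -> B) (c : k) : lin f -> lin (fun x => c *: f x).
Proof. by move=> lf a x y; rewrite lf scalerDr !scalerA mulrC. Qed.

Lemma lin_scale_functional A B (f : A -> k) (u : B) :
  (forall a x y, f (a *: x + y) = a * f x + f y) -> lin (fun x => f x *: u).
Proof. by move=> lf a x y; rewrite lf scalerDl scalerA. Qed.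

Lemma lin_mull A (R : algType k) (f : A -> R) c : lin f -> lin (fun x => c * f x).
Proof. by move=> lf a x y; rewrite lf mulrDr scalerAr. Qed.

Lemma lin_mulr A (R : algType k) (f : A -> R) c : lin f -> lin (fun x => f x * c).
Proof. by move=> lf a x y; rewrite lf mulrDl scalerAl. Qed.

End LinearMaps.

Arguments lin_id {k A}.

Section FormalSums.
Variables (k : fieldType) (V W : lmodType k).

Definition tsum (U : lmodType k) (f : V -> W -> U) (s : seq (k * (V * W))) : U :=
  \sum_(p <- s) p.1 *: f p.2.1 p.2.2.

Lemma lin_tsum (A B : lmodType k) (h : A -> B) (f : V -> W -> A) s :
  lin h -> h (tsum f s) = tsum (fun v w => h (f v w)) s.
Proof.
move=> lh; rewrite /tsum; elim: s => [|p s IH]; first by rewrite !big_nil lin0.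
by rewrite !big_cons lh IH.
Qed.

Lemma eq_tsum (U : lmodType k) (f g : V -> W -> U) s :
  (forall v w, f v w = g v w) -> tsum f s = tsum g s.
Proof. by move=> fg; apply: eq_bigr => p _; rewrite fg. Qed.

Lemma lin_tsum_param (A U : lmodType k) (f : A -> V -> W -> U) s :
  (forall v w, lin (fun a => f a v w)) -> lin (fun a => tsum (f a) s).
Proof.
move=> lf a x y; rewrite /tsum scaler_sumr -big_split /=; apply: eq_bigr => p _.
by rewrite lf scalerDr !scalerA mulrC.
Qed.

End FormalSums.

Section FreeTensor.
Variables (k : fieldType) (V W : lmodType k).

(* Formal sums are identified when no bilinear map separates them; a class is
   represented by its equivalence predicate. *)
Definition tsum_equiv (s1 s2 : seq (k * (V * W))) :=
  forall (U : lmodType k) (f : V -> W -> U), bilin f -> tsum f s1 = tsum f s2.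

Definition ftensor := {P : seq (k * (V * W)) -> Prop | exists s, P = tsum_equiv s}.
Definition ftclass s : ftensor := exist _ (tsum_equiv s) (ex_intro _ s erefl).
Definition ftrepr (x : ftensor) : seq (k * (V * W)) := projT1 (cid (proj2_sig x)).

Lemma ftreprK x : ftclass (ftrepr x) = x.
Proof.
case: x => P HP; rewrite /ftrepr /=; case: cid => s e; subst P.
by congr exist; apply: Prop_irrelevance.
Qed.

Lemma eq_ftclass s1 s2 : tsum_equiv s1 s2 -> ftclass s1 = ftclass s2.
Proof.
move=> eq12; have e : tsum_equiv s1 = tsum_equiv s2.
  apply: funext => s; apply: propext; split => h U f bf.
    by rewrite -eq12 // h.
  by rewrite eq12 // h.
rewrite /ftclass; move: (ex_intro _ s1 _) (ex_intro _ s2 _); rewrite e => p1 p2.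
by congr exist; apply: Prop_irrelevance.
Qed.

Lemma ftclass_equiv s1 s2 : ftclass s1 = ftclass s2 -> tsum_equiv s1 s2.
Proof.
move=> /(congr1 (@proj1_sig _ _)) /= e.
have : tsum_equiv s1 s1 by [].
by rewrite e => h U f bf; rewrite (h U f bf).
Qed.

Definition ftlift (U : lmodType k) (f : V -> W -> U) x := tsum f (ftrepr x).

Lemma ftlift_class (U : lmodType k) (f : V -> W -> U) s :
  bilin f -> ftlift f (ftclass s) = tsum f s.
Proof. by move=> bf; rewrite /ftlift (ftclass_equiv (ftreprK (ftclass s))). Qed.

Lemma ftensorP x y :
  (forall (U : lmodType k) (f : V -> W -> U), bilin f -> ftlift f x = ftlift f y) ->
  x = y.
Proof. by move=> h; rewrite -(ftreprK x) -(ftreprK y); apply: eq_ftclass. Qed.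

HB.instance Definition _ := gen_eqMixin ftensor.
HB.instance Definition _ := gen_choiceMixin ftensor.

Definition ftadd x y := ftclass (ftrepr x ++ ftrepr y).
Definition ftopp x := ftclass [seq (- p.1, p.2) | p <- ftrepr x].
Definition ftzero := ftclass [::].
Definition ftscale (a : k) x := ftclass [seq (a * p.1, p.2) | p <- ftrepr x].

Section LiftOperations.
Variables (U : lmodType k) (f : V -> W -> U).
Hypothesis bf : bilin f.

Lemma ftliftD x y : ftlift f (ftadd x y) = ftlift f x + ftlift f y.
Proof. by rewrite /ftadd ftlift_class // /tsum big_cat. Qed.

Lemma ftliftN x : ftlift f (ftopp x) = - ftlift f x.
Proof.
rewrite /ftopp ftlift_class // /tsum big_map /ftlift /tsum -sumrN.
by apply: eq_bigr => p _; rewrite scaleNr.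
Qed.

Lemma ftlift0 : ftlift f ftzero = 0.
Proof. by rewrite /ftzero ftlift_class // /tsum big_nil. Qed.

Lemma ftliftZ a x : ftlift f (ftscale a x) = a *: ftlift f x.
Proof.
rewrite /ftscale ftlift_class // /tsum big_map /ftlift /tsum scaler_sumr.
by apply: eq_bigr => p _; rewrite scalerA.
Qed.

End LiftOperations.

Local Ltac ftensor_ext :=
  apply: ftensorP => ? ? ?;
  match goal with bf : bilin _ |- _ =>
    rewrite ?(ftliftD bf, ftliftN bf, ftlift0 bf, ftliftZ bf) end.

Lemma ftaddA : associative ftadd. Proof. by move=> x y z; ftensor_ext; rewrite addrA. Qed.
Lemma ftaddC : commutative ftadd. Proof. by move=> x y; ftensor_ext; rewrite addrC. Qed.
Lemma ftadd0 : left_id ftzero ftadd. Proof. by move=> x; ftensor_ext; rewrite add0r. Qed.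
Lemma ftaddN : left_inverse ftzero ftopp ftadd.
Proof. by move=> x; ftensor_ext; rewrite addNr. Qed.

HB.instance Definition _ := GRing.isZmodule.Build ftensor ftaddA ftaddC ftadd0 ftaddN.

Lemma ftscaleA a b x : ftscale a (ftscale b x) = ftscale (a * b) x.
Proof. by ftensor_ext; rewrite scalerA. Qed.
Lemma ftscale1 : left_id 1 ftscale. Proof. by move=> x; ftensor_ext; rewrite scale1r. Qed.
Lemma ftscaleDr : right_distributive ftscale +%R.
Proof.
by move=> a x y; ftensor_ext; rewrite -/(ftadd x y) ?ftliftD ?ftliftZ // scalerDr.
Qed.
Lemma ftscaleDl x : {morph ftscale^~ x : a b / a + b}.
Proof.
by move=> a b; ftensor_ext; rewrite -/(ftadd _ _) ?ftliftD ?ftliftZ // scalerDl.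
Qed.

HB.instance Definition _ :=
  GRing.Zmodule_isLmodule.Build k ftensor ftscaleA ftscale1 ftscaleDr ftscaleDl.

Definition ftpure (v : V) (w : W) : ftensor := ftclass [:: (1, (v, w))].

Lemma ftlift_pure (U : lmodType k) (f : V -> W -> U) v w :
  bilin f -> ftlift f (ftpure v w) = f v w.
Proof. by move=> bf; rewrite ftlift_class // /tsum big_seq1 scale1r. Qed.

Lemma lin_ftlift (U : lmodType k) (f : V -> W -> U) : bilin f -> lin (ftlift f).
Proof. by move=> bf a x y; rewrite (ftliftD bf) (ftliftZ bf). Qed.

Lemma bilin_ftpure : bilin ftpure.
Proof.
split=> [v|w] a x y; apply: ftensorP => U f bf;
  rewrite !(ftliftD bf, ftliftZ bf, ftlift_pure _ _ bf); case: bf => [fv fw].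
  by rewrite fv.
by rewrite fw.
Qed.

Lemma ftensor_tsum x : x = tsum ftpure (ftrepr x).
Proof.
apply: ftensorP => U f bf; rewrite (lin_tsum _ _ (lin_ftlift bf)).
by apply: eq_tsum => v w; rewrite ftlift_pure.
Qed.

Lemma ftensor_is_tensor : is_tensor ftpure.
Proof.
split=> [|U f bf]; first exact: bilin_ftpure.
exists (ftlift f); split=> [||h lh hf c]; first exact: lin_ftlift.
  by move=> v w; rewrite ftlift_pure.
rewrite (ftensor_tsum c) !lin_tsum //; last exact: lin_ftlift.
by apply: eq_tsum => v w; rewrite hf ftlift_pure.
Qed.

Definition ftensorSp : tensorSp V W := TensorSp ftensor_is_tensor.

End FreeTensor.

Section TensorProducts.
Variables (k : fieldType) (V W C : lmodType k) (t : V -> W -> C).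
Hypothesis tensor_t : is_tensor t.

Lemma tensor_tsum c : exists s, c = tsum t s.
Proof.
case: tensor_t => bt univ.
have [to_free [lto to_freeE _]] := univ _ _ (bilin_ftpure V W).
have [id_C [_ _ id_C_uniq]] := univ _ _ bt.
have back c' : ftlift t (to_free c') = id_C c'.
  apply: (id_C_uniq (fun c => ftlift t (to_free c))) => [a x y|v w].
    by rewrite lto (lin_ftlift bt).
  by rewrite to_freeE ftlift_pure.
have idE c' : c' = id_C c' by apply: (id_C_uniq id).
by exists (ftrepr (to_free c)); rewrite -/(ftlift t (to_free c)) back -idE.
Qed.

Lemma lin_tensor_eq (U : lmodType k) (h1 h2 : C -> U) : lin h1 -> lin h2 ->
  (forall v w, h1 (t v w) = h2 (t v w)) -> forall c, h1 c = h2 c.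
Proof.
move=> l1 l2 e c; have [s ->] := tensor_tsum c.
by rewrite !lin_tsum //; apply: eq_tsum.
Qed.

Lemma tensor_lift (U : lmodType k) (f : V -> W -> U) : bilin f ->
  {h : C -> U | lin h /\ forall v w, h (t v w) = f v w}.
Proof.
move=> bf; case: tensor_t => _ univ.
have ex : exists h : C -> U, lin h /\ forall v w, h (t v w) = f v w.
  by have [h [? ? _]] := univ _ _ bf; exists h.
by case: (cid ex) => h hh; exists h.
Qed.

Lemma tsum_lift (U : lmodType k) (f : V -> W -> U) (h : C -> U) s :
  lin h -> (forall v w, h (t v w) = f v w) -> h (tsum t s) = tsum f s.
Proof. by move=> lh hf; rewrite lin_tsum //; apply: eq_tsum. Qed.

Lemma tensor_lift_param (A U : lmodType k) (f : A -> V -> W -> U) :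
  (forall a, bilin (f a)) -> (forall v w, lin (fun a => f a v w)) ->
  {H : A -> C -> U | [/\ forall a, lin (H a), forall a v w, H a (t v w) = f a v w
                       & forall c, lin (fun a => H a c)]}.
Proof.
move=> bf lf; exists (fun a => sval (tensor_lift (bf a))).
have [lH HE] : (forall a, lin (sval (tensor_lift (bf a)))) /\
               (forall a v w, sval (tensor_lift (bf a)) (t v w) = f a v w).
  by split=> a; case: tensor_lift => h [].
split=> // c a x y; have [s ->] := tensor_tsum c.
by rewrite !(tsum_lift _ (lH _) (HE _)); apply: lin_tsum_param.
Qed.

End TensorProducts.

Section TrilinearMaps.
Variable k : fieldType.

Definition trilin (V1 V2 V3 U : lmodType k) (m : V1 -> V2 -> V3 -> U) :=
  [/\ forall b c, lin (fun a => m a b c), forall a c, lin (fun b => m a b c)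
    & forall a b, lin (m a b)].

Variables (V1 V2 V3 U : lmodType k) (m : V1 -> V2 -> V3 -> U).
Hypothesis trilin_m : trilin m.

Lemma tensor_lift3l (C X : lmodType k) (t : V1 -> V2 -> C) (tx : C -> V3 -> X) :
  is_tensor t -> is_tensor tx ->
  {h : X -> U | lin h /\ forall a b c, h (tx (t a b) c) = m a b c}.
Proof.
case: trilin_m => m1 m2 m3 tensor_t tensor_tx.
have [H [lH HE lHc]] := tensor_lift_param tensor_t
  (f := fun c a b => m a b c) (fun c => conj (m2^~ c) (m1^~ c)) (fun a b => m3 a b).
have [h [lh hE]] := tensor_lift tensor_tx (f := fun q c => H c q) (conj lHc lH).
by exists h; split=> // a b c; rewrite hE HE.
Qed.

Lemma tensor_lift3r (C X : lmodType k) (t : V2 -> V3 -> C) (tx : V1 -> C -> X) :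
  is_tensor t -> is_tensor tx ->
  {h : X -> U | lin h /\ forall a b c, h (tx a (t b c)) = m a b c}.
Proof.
case: trilin_m => m1 m2 m3 tensor_t tensor_tx.
have [H [lH HE lHa]] := tensor_lift_param tensor_t
  (f := m) (fun a => conj (fun b => m3 a b) (m2 a)) m1.
have [h [lh hE]] := tensor_lift tensor_tx (f := H) (conj lH lHa).
by exists h; split=> // a b c; rewrite hE HE.
Qed.

End TrilinearMaps.

Lemma lin_tensor3_eqr (k : fieldType) (V1 V2 V3 C X U : lmodType k)
    (t : V2 -> V3 -> C) (tx : V1 -> C -> X) (h1 h2 : X -> U) :
  is_tensor t -> is_tensor tx -> lin h1 -> lin h2 ->
  (forall a b c, h1 (tx a (t b c)) = h2 (tx a (t b c))) -> forall x, h1 x = h2 x.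
Proof.
move=> tensor_t tensor_tx l1 l2 e; apply: (lin_tensor_eq tensor_tx l1 l2) => a.
have [[/(_ a) txa _] _] := tensor_tx.
exact: (lin_tensor_eq tensor_t (lin_comp txa l1) (lin_comp txa l2) (e a)).
Qed.

Section HopfAlgebra.
Variables (k : fieldType) (G : algType k) (GG : tensorAlg G G)
  (D : G -> tal_car GG) (e : G -> k) (S : G -> G).
Hypothesis hopf : is_hopf GG D e S.
Local Notation t := (tal_t GG).

Let tensor_t : is_tensor t := tal_ax GG.

Lemma bilin_tal : bilin t. Proof. by case: tensor_t. Qed.
Lemma coprod_morph : alg_morph D. Proof. by case: hopf => [[]]. Qed.
Lemma coprod_lin : lin D. Proof. by case: coprod_morph. Qed.
Lemma counit_lin a x y : e (a *: x + y) = a * e x + e y.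
Proof. by case: hopf => [[_ []]]. Qed.
Lemma counitM x y : e (x * y) = e x * e y. Proof. by case: hopf => [[_ []]]. Qed.
Lemma counit1 : e 1 = 1. Proof. by case: hopf => [[_ []]]. Qed.
Lemma antipode_lin : lin S. Proof. by case: hopf. Qed.

Lemma lin_antipode (A : lmodType k) (f : A -> G) : lin f -> lin (fun x => S (f x)).
Proof. by move=> lf; apply: lin_comp lf antipode_lin. Qed.

Local Ltac lin_tac := first
  [ exact: lin_id | apply: lin_mulr; lin_tac | apply: lin_mull; lin_tac
  | apply: lin_antipode; lin_tac | apply: lin_scale; lin_tac ].

Definition coprod_seq x := projT1 (cid (tensor_tsum tensor_t (D x))).

Lemma coprod_seqE x : D x = tsum t (coprod_seq x).
Proof. by rewrite /coprod_seq; case: cid. Qed.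

(* sweedler F x = sum F x(1) x(2); it is independent of the chosen
   representation [coprod_seq x] of D x only when F is bilinear. *)
Definition sweedler (U : lmodType k) (F : G -> G -> U) x := tsum F (coprod_seq x).

Lemma sweedler_lift (U : lmodType k) (F : G -> G -> U) (h : tal_car GG -> U) x :
  lin h -> (forall a b, h (t a b) = F a b) -> h (D x) = sweedler F x.
Proof. by move=> lh hF; rewrite coprod_seqE (tsum_lift _ lh hF). Qed.

Lemma sweedler_by_lift (U : lmodType k) (F : G -> G -> U) x : bilin F ->
  exists2 h : tal_car GG -> U, lin h /\ (forall a b, h (t a b) = F a b) &
    h (D x) = sweedler F x.
Proof.
move=> bF; have [h [lh hF]] := tensor_lift tensor_t bF.
by exists h => //; apply: sweedler_lift.
Qed.

Lemma lin_sweedler (U U' : lmodType k) (F : G -> G -> U) (h : U -> U') x :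
  lin h -> h (sweedler F x) = sweedler (fun a b => h (F a b)) x.
Proof. exact: lin_tsum. Qed.

Lemma eq_sweedler (U : lmodType k) (F F' : G -> G -> U) x :
  (forall a b, F a b = F' a b) -> sweedler F x = sweedler F' x.
Proof. exact: eq_tsum. Qed.

Lemma exchange_sweedler (U : lmodType k) (F : G -> G -> G -> G -> U) x y :
  sweedler (fun a b => sweedler (fun c d => F a b c d) y) x =
  sweedler (fun c d => sweedler (fun a b => F a b c d) x) y.
Proof.
rewrite /sweedler /tsum; under eq_bigr do rewrite scaler_sumr.
rewrite exchange_big /=; apply: eq_bigr => q _; rewrite scaler_sumr.
by apply: eq_bigr => p _; rewrite !scalerA mulrC.
Qed.

Lemma sweedlerM (U : lmodType k) (F : G -> G -> U) x y : bilin F ->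
  sweedler F (x * y) =
  sweedler (fun a1 a2 => sweedler (fun b1 b2 => F (a1 * b1) (a2 * b2)) y) x.
Proof.
move=> bF; have [h [lh hF] <-] := sweedler_by_lift (x * y) bF.
have tsumM s1 s2 : tsum t s1 * tsum t s2 =
    tsum (fun a1 a2 => tsum (fun b1 b2 => t (a1 * b1) (a2 * b2)) s2) s1.
  rewrite /tsum mulr_suml; apply: eq_bigr => p _.
  rewrite mulr_sumr scaler_sumr; apply: eq_bigr => q _.
  by rewrite -scalerAl -scalerAr tal_mul.
case: coprod_morph => _ _ ->; rewrite !coprod_seqE tsumM !lin_tsum //.
by apply: eq_tsum => a1 a2; rewrite lin_tsum //; apply: eq_tsum => b1 b2.
Qed.

Lemma sweedler1 (U : lmodType k) (F : G -> G -> U) : bilin F -> sweedler F 1 = F 1 1.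
Proof.
move=> bF; have [h [lh hF] <-] := sweedler_by_lift 1 bF.
by case: coprod_morph => _ -> _; rewrite -tal_one hF.
Qed.

Lemma sweedler_counitl (U : lmodType k) (h : G -> U) x : lin h ->
  sweedler (fun a b => e a *: h b) x = h x.
Proof.
move=> lh; have bF : bilin (fun a (b : G) => e a *: b).
  by split=> [a|b]; [apply: lin_scale | apply: lin_scale_functional counit_lin].
have [psi [lpsi psiE] psiD] := sweedler_by_lift x bF.
have psiK : psi (D x) = x by case: hopf => _ _ _ [counitl _] _; apply: counitl.
by rewrite -{2}psiK psiD lin_sweedler //; apply: eq_sweedler => a b; rewrite (linZ lh).
Qed.

Lemma sweedler_counitr (U : lmodType k) (h : G -> U) x : lin h ->
  sweedler (fun a b => e b *: h a) x = h x.
Proof.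
move=> lh; have bF : bilin (fun (a : G) b => e b *: a).
  by split=> [a|b]; [apply: lin_scale_functional counit_lin | apply: lin_scale].
have [psi [lpsi psiE] psiD] := sweedler_by_lift x bF.
have psiK : psi (D x) = x by case: hopf => _ _ _ [_ counitr] _; apply: counitr.
by rewrite -{2}psiK psiD lin_sweedler //; apply: eq_sweedler => a b; rewrite (linZ lh).
Qed.

Lemma sweedler_antipodel x : sweedler (fun a b => S a * b) x = e x *: 1.
Proof.
have bF : bilin (fun a b => S a * b) by split=> ?; lin_tac.
have [h [lh hF] <-] := sweedler_by_lift x bF.
by case: hopf => _ _ _ _ [antipodel _]; apply: antipodel.
Qed.

Lemma sweedler_antipoder x : sweedler (fun a b => a * S b) x = e x *: 1.
Proof.
have bF : bilin (fun a b => a * S b) by split=> ?; lin_tac.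
have [h [lh hF] <-] := sweedler_by_lift x bF.
by case: hopf => _ _ _ _ [_ antipoder]; apply: antipoder.
Qed.

Lemma sweedler_antipoder_mid (c d : G) x :
  sweedler (fun a b => c * a * S b * d) x = e x *: (c * d).
Proof.
have lcd : lin (fun y => c * y * d) by lin_tac.
have := lin_sweedler (fun a b => a * S b) x lcd.
rewrite /= sweedler_antipoder -scalerAr -scalerAl mulr1 => ->.
by apply: eq_sweedler => a b; rewrite !mulrA.
Qed.

Lemma sweedler_coassoc (U : lmodType k) (m : G -> G -> G -> U) x : trilin m ->
  sweedler (fun a c => sweedler (fun a1 a2 => m a1 a2 c) a) x =
  sweedler (fun a b => sweedler (fun b1 b2 => m a b1 b2) b) x.
Proof.
move=> tm; have [m1 m2 m3] := tm.
pose p1 := @ftpure k (tal_car GG) G; pose p2 := @ftpure k G (tal_car GG).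
have tensor_p1 : is_tensor p1 := ftensor_is_tensor _ _.
have tensor_p2 : is_tensor p2 := ftensor_is_tensor _ _.
have [[p1l p1r] _] := tensor_p1; have [[p2l p2r] _] := tensor_p2.
have [tl tr] := bilin_tal.
have [D1 [lD1 D1E]] := tensor_lift tensor_t (f := fun a b => p1 (D a) b)
  (conj (fun a => p1l (D a)) (fun b => lin_comp coprod_lin (p1r b))).
have [D2 [lD2 D2E]] := tensor_lift tensor_t (f := fun a b => p2 a (D b))
  (conj (fun a => lin_comp coprod_lin (p2l a)) (fun b => p2r (D b))).
have tm_assoc : trilin (fun a b c => p1 (t a b) c).
  split=> [b c|a c|a b]; [exact: lin_comp (tr b) (p1r c)
                         | exact: lin_comp (tl a) (p1r c) | exact: p1l].
have [al [lal alE]] := tensor_lift3r tm_assoc tensor_t tensor_p2.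
have [P1 [lP1 P1E]] := tensor_lift3l tm tensor_t tensor_p1.
have [P2 [lP2 P2E]] := tensor_lift3r tm tensor_t tensor_p2.
have coassocD : al (D2 (D x)) = D1 (D x).
  case: hopf => _ _ coassoc _ _.
  exact: (coassoc (ftensorSp _ _) (ftensorSp _ _) D1 D2 al lD1 lD2 lal D1E D2E alE).
have -> : sweedler (fun a c => sweedler (fun a1 a2 => m a1 a2 c) a) x = P1 (D1 (D x)).
  symmetry; apply: (sweedler_lift (h := fun q => P1 (D1 q))) => [|a c].
    exact: lin_comp lD1 lP1.
  rewrite D1E; exact: (sweedler_lift a (lin_comp (p1r c) lP1) (fun a1 a2 => P1E a1 a2 c)).
have -> : sweedler (fun a b => sweedler (fun b1 b2 => m a b1 b2) b) x = P2 (D2 (D x)).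
  symmetry; apply: (sweedler_lift (h := fun q => P2 (D2 q))) => [|a b].
    exact: lin_comp lD2 lP2.
  rewrite D2E; exact: (sweedler_lift b (lin_comp (p2l a) lP2) (P2E a)).
rewrite -coassocD; apply: lin_tensor3_eqr tensor_t tensor_p2 (lin_comp lal lP1) lP2 _ _.
by move=> a b c; rewrite alE P1E P2E.
Qed.

Lemma antipodeM a b : S (a * b) = S b * S a.
Proof.
have split_counits : S b * S a = sweedler (fun a1 a2 => sweedler (fun b1 b2 =>
    sweedler (fun u1 u2 => sweedler (fun v1 v2 =>
      S (u1 * v1) * (u2 * v2) * (S b2 * S a2)) b1) a1) b) a.
  rewrite -[LHS](sweedler_counitl (h := fun y => S b * S y)); last by lin_tac.
  apply: eq_sweedler => a1 a2.
  rewrite -(sweedler_counitl (h := fun y => e a1 *: (S y * S a2))); last by lin_tac.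
  apply: eq_sweedler => b1 b2.
  have bF : bilin (fun u v => S u * v * (S b2 * S a2)) by split=> ?; lin_tac.
  rewrite -(sweedlerM _ _ bF) -(lin_sweedler _ _ (h := fun y => y * (S b2 * S a2)));
    last by lin_tac.
  by rewrite sweedler_antipodel counitM -scalerAl mul1r scalerA mulrC.
have collapse_b a2 u1 u2 : sweedler (fun b1 b2 => sweedler (fun v1 v2 =>
    S (u1 * v1) * (u2 * v2) * (S b2 * S a2)) b1) b = S (u1 * b) * u2 * S a2.
  rewrite (sweedler_coassoc (m := fun v1 v2 b2 =>
    S (u1 * v1) * (u2 * v2) * (S b2 * S a2))); last by split=> *; lin_tac.
  rewrite -(sweedler_counitr (h := fun v1 => S (u1 * v1) * u2 * S a2)); last by lin_tac.
  apply: eq_sweedler => b1 b2; rewrite -sweedler_antipoder_mid.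
  by apply: eq_sweedler => v1 v2; rewrite !mulrA.
rewrite split_counits; under eq_sweedler do rewrite exchange_sweedler.
under eq_sweedler do under eq_sweedler do rewrite collapse_b.
rewrite (sweedler_coassoc (m := fun u1 u2 a2 => S (u1 * b) * u2 * S a2));
  last by split=> *; lin_tac.
rewrite -[LHS](sweedler_counitr (h := fun y => S (y * b))); last by lin_tac.
apply: eq_sweedler => a1 a2; rewrite -{1}[S (a1 * b)]mulr1 -sweedler_antipoder_mid.
by apply: eq_sweedler => u1 u2; rewrite mulr1.
Qed.

Lemma antipode1 : S 1 = 1.
Proof.
have bF : bilin (fun a b => a * S b) by split=> ?; lin_tac.
by have := sweedler_antipoder 1; rewrite sweedler1 // counit1 scale1r mul1r.
Qed.

End HopfAlgebra.

Section CoactionOnLocalization.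
Variables (k : fieldType) (G : algType k) (GG : tensorAlg G G)
  (D : G -> tal_car GG) (e : G -> k) (S : G -> G).
Hypothesis hopf : is_hopf GG D e S.
Variables (T : G -> Prop) (L : algType k) (i : G -> L) (LG : tensorAlg L G)
  (DT : L -> tal_car LG).
Hypothesis loc_i : is_left_loc T i.
Hypothesis comod_DT : is_comod_ext GG D e i LG DT.
Local Notation tL := (tal_t LG).

Let tensor_tL : is_tensor tL := tal_ax LG.
Let bilin_tL : bilin tL. Proof. by case: tensor_tL. Qed.

Lemma loc_lin : lin i. Proof. by case: loc_i => [[]]. Qed.
Lemma loc1 : i 1 = 1. Proof. by case: loc_i => [[]]. Qed.
Lemma locM a b : i (a * b) = i a * i b. Proof. by case: loc_i => [[]]. Qed.

Lemma coact_lin : lin DT. Proof. by case: comod_DT => [[]]. Qed.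
Lemma coact1 : DT 1 = 1. Proof. by case: comod_DT => [[]]. Qed.
Lemma coactM x y : DT (x * y) = DT x * DT y. Proof. by case: comod_DT => [[]]. Qed.

Lemma coact_loc g : DT (i g) = sweedler D (fun a b => tL (i a) b) g.
Proof.
have bF : bilin (fun a b => tL (i a) b).
  by split=> [a|b]; [apply: bilin_tL.1 | apply: lin_comp loc_lin (bilin_tL.2 b)].
have [h [lh hF] <-] := sweedler_by_lift D g bF.
by case: comod_DT => _ compat _ _; apply: compat.
Qed.

Lemma bilin_twist : bilin (fun (x : L) (g : G) => x * i (S g)).
Proof.
split=> [x|g]; last exact: lin_mulr lin_id.
exact: lin_mull (lin_comp (antipode_lin hopf) loc_lin).
Qed.

Definition twist : tal_car LG -> L := sval (tensor_lift tensor_tL bilin_twist).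

Lemma twist_lin : lin twist.
Proof. by rewrite /twist; case: tensor_lift => h []. Qed.

Lemma twist_pure x g : twist (tL x g) = x * i (S g).
Proof. by rewrite /twist; case: tensor_lift => h []. Qed.

Lemma twist1 : twist 1 = 1.
Proof. by rewrite -tal_one twist_pure (antipode1 hopf) loc1 mulr1. Qed.

Lemma twist_coact_loc z a : twist (z * DT (i a)) = e a *: twist z.
Proof.
have l1 : lin (fun z => twist (z * DT (i a))).
  exact: lin_comp (lin_mulr _ lin_id) twist_lin.
move: z; apply: (lin_tensor_eq tensor_tL l1 (lin_scale _ twist_lin)) => x g.
have lh : lin (fun y => twist (tL x g * y)).
  exact: lin_comp (lin_mull _ lin_id) twist_lin.
have lh' : lin (fun y => x * i y * i (S g)) by apply/lin_mulr/lin_mull/loc_lin.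
have := lin_sweedler D (fun a b => tL (i a) b) a lh; rewrite /= coact_loc => ->.
have := lin_sweedler D (fun a b => a * S b) a lh'.
rewrite /= (sweedler_antipoder hopf) (linZ loc_lin) loc1 twist_pure.
rewrite -scalerAr -scalerAl mulr1 => ->.
apply: eq_sweedler => a1 a2.
by rewrite tal_mul twist_pure (antipodeM hopf) !locM !mulrA.
Qed.

Lemma coact_scalar y : exists c : k, forall z, twist (z * DT y) = c *: twist z.
Proof.
case: loc_i => _ loc_unit loc_frac _.
have [s [r [Ts sy]]] := loc_frac y; have [u [us _]] := loc_unit s Ts.
have es_neq0 : e s != 0.
  apply/eqP => es0; have := twist_coact_loc (DT u) s.
  rewrite -coactM us coact1 twist1 es0 scale0r => /eqP; exact/negP/oner_neq0.
have twist_u z : twist (z * DT u) = (e s)^-1 *: twist z.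
  have := twist_coact_loc (z * DT u) s; rewrite -mulrA -coactM us coact1 mulr1 => ->.
  by rewrite scalerA mulVf // scale1r.
exists (e r / e s) => z.
have -> : y = u * i r by rewrite -sy mulrA us mul1r.
by rewrite coactM mulrA twist_coact_loc twist_u scalerA mulrC.
Qed.

Definition ext_counit y : k := projT1 (cid (coact_scalar y)).

Lemma ext_counitP y z : twist (z * DT y) = ext_counit y *: twist z.
Proof. by rewrite /ext_counit; case: cid. Qed.

Lemma ext_counit_unique y c :
  (forall z, twist (z * DT y) = c *: twist z) -> ext_counit y = c.
Proof.
move=> hc; have := ext_counitP y 1; rewrite hc twist1 => /eqP.
rewrite -subr_eq0 -scalerBl scaler_eq0 oner_eq0 orbF subr_eq0.
by move=> /eqP.
Qed.

Lemma ext_counit_lin a x y :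
  ext_counit (a *: x + y) = a * ext_counit x + ext_counit y.
Proof.
apply: ext_counit_unique => z.
rewrite coact_lin mulrDr -scalerAr twist_lin !ext_counitP.
by rewrite scalerA -scalerDl.
Qed.

Lemma ext_counitM x y : ext_counit (x * y) = ext_counit x * ext_counit y.
Proof.
apply: ext_counit_unique => z.
by rewrite coactM mulrA !ext_counitP scalerA mulrC.
Qed.

Lemma ext_counit1 : ext_counit 1 = 1.
Proof. by apply: ext_counit_unique => z; rewrite coact1 mulr1 scale1r. Qed.

Lemma ext_counit_loc a : ext_counit (i a) = e a.
Proof. by apply: ext_counit_unique => z; apply: twist_coact_loc. Qed.

Lemma bilin_counit_tensor : bilin (fun (x : L) (g : G) => ext_counit x *: g).
Proof.
split=> [x|g]; last exact: lin_scale_functional ext_counit_lin.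
exact: lin_scale _ lin_id.
Qed.

Definition counit_tensor : tal_car LG -> G :=
  sval (tensor_lift tensor_tL bilin_counit_tensor).

Lemma counit_tensor_lin : lin counit_tensor.
Proof. by rewrite /counit_tensor; case: tensor_lift => h []. Qed.

Lemma counit_tensor_pure x g : counit_tensor (tL x g) = ext_counit x *: g.
Proof. by rewrite /counit_tensor; case: tensor_lift => h []. Qed.

Lemma counit_tensorM p q : counit_tensor (p * q) = counit_tensor p * counit_tensor q.
Proof.
have lP := counit_tensor_lin.
have l1 : lin (fun p => counit_tensor (p * q)).
  exact: lin_comp (lin_mulr _ lin_id) lP.
move: p; apply: (lin_tensor_eq tensor_tL l1 (lin_mulr _ lP)) => x g {l1}.
have l2 : lin (fun q => counit_tensor (tL x g * q)).
  exact: lin_comp (lin_mull _ lin_id) lP.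
move: q; apply: (lin_tensor_eq tensor_tL l2 (lin_mull _ lP)) => y h.
rewrite tal_mul !counit_tensor_pure ext_counitM.
by rewrite -scalerAl -scalerAr scalerA.
Qed.

Lemma counit_tensor1 : counit_tensor 1 = 1.
Proof. by rewrite -tal_one counit_tensor_pure ext_counit1 scale1r. Qed.

Lemma counit_tensor_coact_loc a : counit_tensor (DT (i a)) = a.
Proof.
have := lin_sweedler D (fun a b => tL (i a) b) a counit_tensor_lin.
rewrite -coact_loc => ->; rewrite -[RHS](sweedler_counitl hopf a lin_id).
by apply: eq_sweedler => a1 a2; rewrite counit_tensor_pure ext_counit_loc.
Qed.

Lemma denom_left_inv s : T s -> exists v, v * s = 1.
Proof.
case: loc_i => _ /(_ s) loc_unit _ _ /loc_unit [u [us _]].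
exists (counit_tensor (DT u)).
rewrite -[in X in _ * X](counit_tensor_coact_loc s) -counit_tensorM -coactM.
by rewrite us coact1 counit_tensor1.
Qed.

Lemma loc_inj : injective i.
Proof.
move=> a b iab; apply/eqP; rewrite -subr_eq0; apply/eqP.
have [s [Ts sab]] : exists s, T s /\ s * (a - b) = 0.
  case: loc_i => _ _ _ /(_ (a - b)) [ker _]; apply: ker.
  by rewrite (linB loc_lin) iab subrr.
have [v vs] := denom_left_inv Ts.
by rewrite -[a - b]mul1r -vs -mulrA sab mulr0.
Qed.

Lemma loc_surj x : exists a, i a = x.
Proof.
case: loc_i => _ _ /(_ x) [s [r [Ts sx]]] _.
have [v vs] := denom_left_inv Ts.
by exists (v * r); rewrite locM -sx mulrA -locM vs loc1 mul1r.
Qed.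

Lemma loc_bij : bijective i.
Proof.
have inv x : {a | i a = x} by apply/cid/loc_surj.
exists (fun x => sval (inv x)) => [a|x]; last by case: (inv x).
by apply: loc_inj; case: (inv (i a)).
Qed.

End CoactionOnLocalization.

Theorem mainTheorem6 (k : fieldType) (G : algType k) (GG : tensorAlg G G)
    (D : G -> tal_car GG) (e : G -> k) (S : G -> G)
    (hopf : is_hopf GG D e S)
    (T : G -> Prop) (HT : left_ore_set T)
    (L : algType k) (i : G -> L) (Hi : is_left_loc T i)
    (LG : tensorAlg L G) :
  ~ (~ bijective i /\ exists DT : L -> tal_car LG, is_comod_ext GG D e i LG DT).
Proof.
case=> not_bij [DT comod_DT]; apply: not_bij.
exact: (loc_bij hopf Hi comod_DT).
Qed.
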